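(* Let $(R,\mathfrak m,k)$ be a one-dimensional analytically irreducible local domain with canonical map $k\to\overline R/\mathfrak n$ an isomorphism, with $v,a_i,n,I_i,\mathcal T(R),\mathcal I(R)$ as in the context. Let $n\ge 4$ and assume there exists $1\le i\le n-3$ such that $I_iI_{i+2}\ne qI_{i+2}$ for some (equivalently, any) $q\in R$ with $v(q)=a_i$. Then: (1) $\mathcal I(R)\subsetneq\mathcal T(R)$; (2) if $k$ is infinite, then $\mathcal T(R)$ is an infinite set.
   Context: $\overline R$ is the integral closure of $R$ in $Q(R)$, assumed finitely generated over $R$ and local with maximal ideal $\mathfrak n$; $v$ is the normalized valuation of $\overline R$; $v(R)=\{a_0=0<a_1<\cdots\}$; $n$ is the smallest integer with $a_{n+j}=a_n+j$ for all $j\ge 0$; $I_j=\{r\in R\mid v(r)\ge a_j\}$ for $0\le j\le n$; $\mathcal I(R)=\{I_0,\dots,I_n\}$. $\mathcal T(R)$ is the set of nonzero trace ideals of $R$ (ideals of the form $\sum_{f\in\mathrm{Hom}_R(M,R)}\mathrm{Im}f$). *)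

From HB Require Import structures.
From mathcomp Require Import all_boot all_order all_algebra.
Set Implicit Arguments. Unset Strict Implicit. Unset Printing Implicit Defensive.
Import Order.TTheory GRing.Theory Num.Theory.
Local Open Scope ring_scope.

Section Ideals.
Variable A : comUnitRingType.

Definition is_ideal (I : A -> Prop) : Prop :=
  [/\ I 0, (forall x y, I x -> I y -> I (x + y)) & (forall a x, I x -> I (a * x))].

Definition same_ideal (I J : A -> Prop) : Prop := forall x, I x <-> J x.
Definition nonzero_ideal (I : A -> Prop) : Prop := exists x, I x /\ x != 0.

Definition ideal_gen (s : seq A) (x : A) : Prop :=
  exists c : 'I_(size s) -> A, x = \sum_(i < size s) c i * s`_i.

Definition is_noetherian : Prop :=
  forall I, is_ideal I -> exists s : seq A, same_ideal I (ideal_gen s).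

Definition is_prime_ideal (P : A -> Prop) : Prop :=
  [/\ is_ideal P, ~ P 1 & forall a b, P (a * b) -> P a \/ P b].

Definition is_maximal_ideal (M : A -> Prop) : Prop :=
  [/\ is_ideal M, ~ M 1 &
     forall J, is_ideal J -> (forall x, M x -> J x) -> J 1 \/ same_ideal J M].

Definition krull_dim_one : Prop :=
  (exists P, is_prime_ideal P /\ nonzero_ideal P) /\
  (forall P, is_prime_ideal P -> nonzero_ideal P -> is_maximal_ideal P).

Definition nonunits (x : A) : Prop := ~ (x \is a GRing.unit).

Definition is_local : Prop := is_ideal nonunits.

(* residue field k = A / m is infinite *)
Definition infinite_residue_field : Prop :=
  forall s : seq A, exists r, forall x, x \in s -> ~ nonunits (r - x).

Definition ideal_mul (I J : A -> Prop) (x : A) : Prop :=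
  exists k (f g : 'I_k -> A), (forall i, I (f i)) /\ (forall i, J (g i)) /\
    x = \sum_(i < k) f i * g i.

Definition scale_ideal (q : A) (J : A -> Prop) (x : A) : Prop :=
  exists y, J y /\ x = q * y.

Definition is_hom (M : lmodType A) (f : M -> A) : Prop :=
  forall (c : A) (x y : M), f (c *: x + y) = c * f x + f y.

Definition trace_ideal (M : lmodType A) (x : A) : Prop :=
  exists k (f : 'I_k -> M -> A) (m : 'I_k -> M),
    (forall i, is_hom (f i)) /\ x = \sum_(i < k) f i (m i).

Definition is_trace_ideal (I : A -> Prop) : Prop :=
  exists M : lmodType A, same_ideal I (trace_ideal M).

Definition in_TR (I : A -> Prop) : Prop := is_trace_ideal I /\ nonzero_ideal I.

End Ideals.

Section Closure.
Variables (R : idomainType) (K : fieldType) (iota : {rmorphism R -> K}).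

Definition is_fraction_field : Prop :=
  injective iota /\
  forall x : K, exists a b : R, b != 0 /\ x = iota a / iota b.

Definition Rbar (x : K) : Prop :=
  exists p : {poly R}, p \is monic /\ root (map_poly iota p) x.

Definition Rbar_finite : Prop :=
  exists s : seq K, (forall i, (i < size s)%N -> Rbar s`_i) /\
    forall x, Rbar x ->
      exists c : 'I_(size s) -> R, x = \sum_(i < size s) iota (c i) * s`_i.

Definition Rbar_nonunit (x : K) : Prop := Rbar x /\ (x = 0 \/ ~ Rbar x^-1).

Definition Rbar_local : Prop :=
  [/\ Rbar_nonunit 0, ~ Rbar_nonunit 1,
      (forall x y, Rbar_nonunit x -> Rbar_nonunit y -> Rbar_nonunit (x + y)) &
      (forall a x, Rbar a -> Rbar_nonunit x -> Rbar_nonunit (a * x))].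

(* canonical map k = R/m -> Rbar/n is an isomorphism *)
Definition residue_iso : Prop :=
  (forall r : R, Rbar_nonunit (iota r) -> nonunits r) /\
  (forall x, Rbar x -> exists r : R, Rbar_nonunit (x - iota r)).

Definition normalized_valuation_of_Rbar (v : K -> int) : Prop :=
  [/\ (forall x y, x != 0 -> y != 0 -> v (x * y) = v x + v y),
      (forall x y, x != 0 -> y != 0 -> x + y != 0 -> Num.min (v x) (v y) <= v (x + y)),
      (exists t, t != 0 /\ v t = 1) &
      (forall x, x != 0 -> (Rbar x <-> 0 <= v x))].

Definition enumerates_value_semigroup (v : K -> int) (a : nat -> nat) : Prop :=
  [/\ (forall j, (a j < a j.+1)%N),
      (forall j, exists r : R, r != 0 /\ v (iota r) = (a j)%:Z) &
      (forall r : R, r != 0 -> exists j, v (iota r) = (a j)%:Z)].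

Definition conductor_index (a : nat -> nat) (n : nat) : Prop :=
  (forall j, a (n + j) = a n + j)%N /\
  (forall m, (forall j, a (m + j) = a m + j)%N -> (n <= m)%N).

Definition Ival (v : K -> int) (a : nat -> nat) (j : nat) (r : R) : Prop :=
  r = 0 \/ (a j)%:Z <= v (iota r).

End Closure.

(* An ideal J containing some q <> 0 is a trace ideal as soon as R :_K J is contained in
   J :_K J, because every homomorphism J -> R is multiplication by f(q)/q.  Since a_n - 1 is
   a gap of v(R), every multiplier of an ideal containing the conductor has nonnegative value;
   hence each I_j with j <= n is a trace ideal.
   Take i maximal with I_i I_(i+2) <> q I_(i+2), where v(q) = a_i; then
   I_(i+1) I_(i+3) = p I_(i+3) whenever v(p) = a_(i+1).  The ideal J = qR + I_(i+2) is a trace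
   ideal: a multiplier c of J is r + m with r in R and v(m) >= 1, and m q cannot have value
   a_(i+1), since such an m would force I_i I_(i+2) = q I_(i+2); so m q lies in I_(i+2).  J
   contains no element of value a_(i+1), so it is none of the I_j.  The same holds with q
   replaced by q + al p, v(p) = a_(i+1), and two such ideals differ as soon as al - be is a
   unit: an infinite residue field gives infinitely many trace ideals. *)

From HB Require Import structures.
From mathcomp Require Import all_boot all_order all_algebra.
From mathcomp Require Import zify ring boolp.
Set Implicit Arguments. Unset Strict Implicit. Unset Printing Implicit Defensive.
Import Order.TTheory GRing.Theory Num.Theory.
Local Open Scope ring_scope.

Section IdealModule.
Variables (A : comUnitRingType) (J : A -> Prop).
Hypothesis J_ideal : is_ideal J.

Definition ideal_mem : {pred A^o} := fun x => `[< J x >].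

Lemma ideal_memP x : reflect (J x) (x \in ideal_mem).
Proof. exact: asboolP. Qed.

Lemma ideal_mem_subsemimod_closed : subsemimod_closed ideal_mem.
Proof.
case: J_ideal => J0 JD JM; split; first split.
- exact/ideal_memP.
- by move=> x y /ideal_memP Jx /ideal_memP Jy; apply/ideal_memP; apply: JD.
- by move=> c x /ideal_memP Jx; apply/ideal_memP; apply: JM.
Qed.

Definition ideal_module := {x : A^o | x \in ideal_mem}.
HB.instance Definition _ := [isSub for (@sval _ _) : ideal_module -> A^o].
HB.instance Definition _ := [Choice of ideal_module by <:].
HB.instance Definition _ := GRing.SubChoice_isSubLmodule.Build
  A A^o ideal_mem ideal_module ideal_mem_subsemimod_closed.
(* The module structure depends on [J_ideal], hence the packed structure [ideal_lmod J_ideal]. *)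
Definition ideal_lmod : lmodType A := ideal_module.

Lemma ideal_module_mem (x : ideal_module) : J (val x).
Proof. exact/ideal_memP/valP. Qed.

Lemma ideal_sub_trace_module x : J x -> trace_ideal ideal_lmod x.
Proof.
move=> /ideal_memP Jx; exists 1%N, (fun _ (y : ideal_lmod) => val y), (fun _ => Sub x Jx).
by split=> [_ c y z //|]; rewrite big_ord1 SubK.
Qed.

Lemma hom_ideal_lmod_comm (f : ideal_lmod -> A) (x y : ideal_lmod) :
  is_hom f -> val x * f y = val y * f x.
Proof.
move=> f_hom; have f0 : f 0 = 0.
  have /eqP := f_hom 1 0 0; rewrite scale1r addr0 mul1r addrC -subr_eq subrr.
  by rewrite eq_sym => /eqP.
have fZ c z : f (c *: z) = c * f z by have := f_hom c z 0; rewrite !addr0 f0 addr0.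
rewrite -!fZ; congr f; apply: val_inj; exact: mulrC.
Qed.

End IdealModule.

Section TraceCriterion.
Variables (R : idomainType) (K : fieldType) (iota : {rmorphism R -> K}).
Hypothesis iota_inj : injective iota.

Lemma iota_eq0 r : (iota r == 0) = (r == 0).
Proof. by rewrite -(rmorph0 iota) (inj_eq iota_inj). Qed.

(* [R :_K J] is contained in [J :_K J]. *)
Definition dual_stable (J : R -> Prop) : Prop :=
  forall c : K, c != 0 -> (forall y, J y -> exists r, iota r = c * iota y) ->
  forall y r, J y -> iota r = c * iota y -> J r.

(* A homomorphism [f : J -> R] is multiplication by [f q / q]. *)
Lemma in_TR_of_dual_stable J q :
  is_ideal J -> J q -> q != 0 -> dual_stable J -> in_TR J.
Proof.
move=> J_ideal Jq q0 J_stable; split; last by exists q.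
exists (ideal_lmod J_ideal) => x; split; first exact: (ideal_sub_trace_module J_ideal).
case=> k [f [m [f_hom ->]]]; case: (J_ideal) => J0 JD _.
apply: (big_ind J) => // l _.
pose qJ : ideal_lmod J_ideal := Sub q (introT (ideal_memP J q) Jq).
have comm y : q * f l y = val y * f l qJ := hom_ideal_lmod_comm qJ y (f_hom l).
have [fq0|fq0] := eqVneq (f l qJ) 0.
  have /eqP : q * f l (m l) = 0 by rewrite comm fq0 mulr0.
  by rewrite mulf_eq0 (negbTE q0) => /eqP ->.
have iq0 : iota q != 0 by rewrite iota_eq0.
have mult y : iota (f l y) = iota (f l qJ) / iota q * iota (val y).
  by rewrite mulrAC [_ * iota _]mulrC -rmorphM -comm rmorphM mulrC mulfK.
apply: (J_stable (iota (f l qJ) / iota q)) (ideal_module_mem (m l)) (mult _).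
  by rewrite mulf_neq0 ?invr_neq0 ?iota_eq0.
by move=> y Jy; exists (f l (Sub y (introT (ideal_memP J y) Jy))); rewrite mult SubK.
Qed.

End TraceCriterion.

Section IdealProducts.
Variable A : comUnitRingType.

Lemma ideal_mul_prod (I J : A -> Prop) x y : I x -> J y -> ideal_mul I J (x * y).
Proof. by move=> Ix Jy; exists 1%N, (fun _ => x), (fun _ => y); rewrite big_ord1. Qed.

Lemma ideal_mul_eq_scale (I J : A -> Prop) q : is_ideal J -> I q ->
  (forall x y, I x -> J y -> exists2 z, J z & x * y = q * z) ->
  same_ideal (ideal_mul I J) (scale_ideal q J).
Proof.
case=> J0 JD _ Iq qIJ x; split=> [[k [f [g [If [Jg ->]]]]]|[y [Jy ->]]]; last first.
  exact: ideal_mul_prod.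
apply: (big_ind (scale_ideal q J)).
- by exists 0; rewrite mulr0.
- move=> _ _ [y1 [J1 ->]] [y2 [J2 ->]]; exists (y1 + y2).
  by rewrite mulrDr; split; first exact: JD.
- by move=> l _; have [z Jz ->] := qIJ _ _ (If l) (Jg l); exists z.
Qed.

Lemma infinite_residue_avoid (T : A -> A -> Prop) :
  infinite_residue_field A ->
  (forall al be, same_ideal (T al) (T be) -> nonunits (al - be)) ->
  forall k (L : 'I_k -> A -> Prop), exists al, forall l, ~ same_ideal (T al) (L l).
Proof.
move=> Ainf T_sep k L.
pose f l := if pselect (exists al, same_ideal (T al) (L l)) is left h then projT1 (cid h) else 0.
have fP l : (exists al, same_ideal (T al) (L l)) -> same_ideal (T (f l)) (L l).
  by rewrite /f; case: pselect => // h _; exact: (projT2 (cid h)).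
have [r r_avoid] := Ainf [seq f l | l <- enum 'I_k].
exists r => l TrL; apply: (r_avoid (f l)); first exact/map_f/mem_enum.
have TfL := fP l (ex_intro _ r TrL).
by apply: T_sep => x; rewrite TrL TfL.
Qed.

End IdealProducts.

Lemma bounded_up_ind (T : Type) (w : T -> int) (P Q : T -> Prop) (N : int) :
  (forall z, Q z -> N <= w z -> P z) ->
  (forall z, Q z -> exists z', (P z' \/ Q z' /\ w z < w z') /\ (P z' -> P z)) ->
  forall z, Q z -> P z.
Proof.
move=> base step; suff up k z : Q z -> N <= w z + k%:Z -> P z.
  by move=> z Qz; apply: (up `|N - w z|%N z Qz); lia.
elim: k z => [|k IHk] z Qz hk; first by apply: base; rewrite addr0 in hk.
have [z' [[Pz'|[Qz' lt]] imp]] := step z Qz; apply: imp => //.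
by apply: IHk => //; lia.
Qed.

Section Valuation.
Variables (R : idomainType) (K : fieldType) (iota : {rmorphism R -> K}) (v : K -> int).
Hypothesis iota_frac : is_fraction_field iota.
Hypothesis v_norm : normalized_valuation_of_Rbar iota v.

Let iota_inj : injective iota := proj1 iota_frac.

Lemma iota_neq0 r : r != 0 -> iota r != 0.
Proof. by rewrite iota_eq0. Qed.

Lemma vM x y : x != 0 -> y != 0 -> v (x * y) = v x + v y.
Proof. by case: v_norm => + _ _ _; apply. Qed.

Lemma v1 : v 1 = 0.
Proof.
have := vM (oner_neq0 K) (oner_neq0 K); rewrite mulr1 => /esym/eqP.
by rewrite -subr_eq0 addrK => /eqP.
Qed.

Lemma vV x : x != 0 -> v x^-1 = - v x.
Proof. by move=> x0; have := vM x0 (invr_neq0 x0); rewrite mulfV // v1 => ?; lia. Qed.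

Lemma vN x : v (- x) = v x.
Proof.
have [->|x0] := eqVneq x 0; first by rewrite oppr0.
have N10 : (-1 : K) != 0 by rewrite oppr_eq0 oner_neq0.
have := vM N10 N10; rewrite mulrNN mulr1 v1 => vN1.
by rewrite -mulN1r vM //; lia.
Qed.

Lemma vD_ge x y (N : int) : x != 0 -> y != 0 -> x + y != 0 ->
  N <= v x -> N <= v y -> N <= v (x + y).
Proof.
case: v_norm => _ vD _ _ x0 y0 xy0 Nx Ny.
by apply: le_trans (vD _ _ x0 y0 xy0); rewrite le_min Nx Ny.
Qed.

Lemma vD_lt x y : x != 0 -> (y != 0 -> v x < v y) -> x + y != 0 /\ v (x + y) = v x.
Proof.
move=> x0 lt; have [->|y0] := eqVneq y 0; first by rewrite addr0.
have {}lt := lt y0.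
have xy0 : x + y != 0.
  by apply: contraTneq lt => /eqP; rewrite addr_eq0 => /eqP ->; rewrite vN ltxx.
split=> //; apply/eqP; rewrite eq_le; apply/andP; split; last first.
  by apply: vD_ge => //; exact: ltW.
rewrite leNgt; apply/negP => gt.
have := @vD_ge (x + y) (- y) (v x + 1) xy0; rewrite addrK vN oppr_eq0.
by move=> /(_ y0 x0); lia.
Qed.

Lemma Rbar_v x : x != 0 -> Rbar iota x <-> 0 <= v x.
Proof. by case: v_norm => _ _ _; apply. Qed.

Lemma Rbar_nonunit_v z : Rbar_nonunit iota z -> z != 0 -> 1 <= v z.
Proof.
case=> Rz [->|Rz'] z0; first by rewrite eqxx in z0.
rewrite -gtz0_ge1 lt_neqAle (Rbar_v z0).1 // andbT; apply: contra_notN Rz' => /eqP vz0.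
by apply/(Rbar_v (invr_neq0 z0)); rewrite vV // -vz0.
Qed.

Lemma exists_v (z : int) : exists2 y, y != 0 & v y = z.
Proof.
case: v_norm => _ _ [t [t0 vt]] _.
have vX k : v (t ^+ k) = k%:Z.
  by elim: k => [|k IHk]; rewrite ?v1 // exprS vM ?expf_neq0 // vt IHk; lia.
case: z => k; first by exists (t ^+ k); rewrite ?expf_neq0 ?vX.
by exists (t ^+ k.+1)^-1; rewrite ?invr_neq0 ?expf_neq0 // vV ?expf_neq0 // vX NegzE.
Qed.

Lemma common_denominator (s : seq K) :
  exists2 d, d != 0 & forall i, (i < size s)%N -> exists r, iota d * s`_i = iota r.
Proof.
elim: s => [|x s [d d0 ds]]; first by exists 1; [exact: oner_neq0 | case].
have [b [c [c0 ->]]] := iota_frac.2 x.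
exists (c * d); first by rewrite mulf_neq0.
case=> [_|i /ds [r dsr]]; last by exists (c * r); rewrite /= !rmorphM -mulrA dsr.
exists (d * b); rewrite !rmorphM mulrAC mulrCA mulfV ?iota_neq0 //; ring.
Qed.

Hypothesis residue : residue_iso iota.

Lemma residue_approx x h : x != 0 -> h != 0 -> v x = v (iota h) ->
  exists r, x - iota (h * r) != 0 -> v x < v (x - iota (h * r)).
Proof.
move=> x0 h0 vxh; have ih0 := iota_neq0 h0; set u := x / iota h.
have u0 : u != 0 by rewrite mulf_neq0 ?invr_neq0.
have [|r /Rbar_nonunit_v ur] := residue.2 u.
  by apply/(Rbar_v u0); rewrite vM ?invr_neq0 // vV // vxh addrN.
exists r; have -> : x - iota (h * r) = iota h * (u - iota r).
  by rewrite rmorphM mulrBr /u mulrCA mulfV // mulr1.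
rewrite mulf_eq0 negb_or ih0 /= => ur0.
by have := ur ur0; rewrite vM // vxh ltrDl gtz0_ge1.
Qed.

Lemma iota_eq_mul_neq0 c y r : iota r = c * iota y -> r != 0 -> c != 0 /\ y != 0.
Proof.
by move=> cyr; rewrite -(iota_eq0 iota_inj) cyr mulf_eq0 negb_or (iota_eq0 iota_inj) => /andP.
Qed.

Section ValueSemigroup.
Variable a : nat -> nat.
Hypothesis a_enum : enumerates_value_semigroup iota v a.

Local Notation I := (Ival iota v a).

Lemma a_mono : {mono a : i j / (i <= j)%N}.
Proof. by apply/leq_mono/(homo_ltn ltn_trans); case: a_enum. Qed.

Lemma a_ltn_mono : {mono a : i j / (i < j)%N}.
Proof. exact/leqW_mono/a_mono. Qed.

Lemma v_iota_semigroup r : r != 0 -> exists j, v (iota r) = (a j)%:Z.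
Proof. by case: a_enum => _ _; apply. Qed.

Lemma exists_v_iota j : exists2 r, r != 0 & v (iota r) = (a j)%:Z.
Proof. by case: a_enum => _ /(_ j) [r []]; exists r. Qed.

Lemma v_iota_ge0 r : r != 0 -> 0 <= v (iota r).
Proof. by move=> /v_iota_semigroup [j ->]. Qed.

Lemma v_iota_next r j : r != 0 -> (a j)%:Z < v (iota r) -> (a j.+1)%:Z <= v (iota r).
Proof. by move=> /v_iota_semigroup [k ->]; rewrite ltz_nat lez_nat a_ltn_mono a_mono. Qed.

Lemma I_v j x : I j x -> x != 0 -> (a j)%:Z <= v (iota x).
Proof. by case=> [->|//]; rewrite eqxx. Qed.

Lemma I_of_v j x : (x != 0 -> (a j)%:Z <= v (iota x)) -> I j x.
Proof. by rewrite /Ival; case: eqVneq => [|_ /(_ isT)]; [left | right]. Qed.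

Lemma I_subset j k x : (j <= k)%N -> I k x -> I j x.
Proof.
move=> jk Ikx; apply: I_of_v => /(I_v Ikx); apply: le_trans.
by rewrite lez_nat a_mono.
Qed.

Lemma I_next j x : (x != 0 -> (a j)%:Z < v (iota x)) -> I j.+1 x.
Proof. by move=> ltx; apply: I_of_v => x0; exact: v_iota_next (ltx x0). Qed.

Lemma I_add j x y : I j x -> I j y -> I j (x + y).
Proof.
have [->|x0] := eqVneq x 0; first by rewrite add0r.
have [->|y0] := eqVneq y 0; first by rewrite addr0.
move=> /I_v /(_ x0) vx /I_v /(_ y0) vy; apply: I_of_v => xy0.
by rewrite rmorphD; apply: vD_ge; rewrite -?rmorphD ?iota_neq0.
Qed.

Lemma I_mul j b x : I j x -> I j (b * x).
Proof.
move=> Ix; apply: I_of_v; rewrite mulf_eq0 negb_or => /andP [b0 x0].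
rewrite rmorphM vM ?iota_neq0 // -[X in X <= _]add0r.
exact: lerD (v_iota_ge0 b0) (I_v Ix x0).
Qed.

Lemma I_ideal j : is_ideal (I j).
Proof. by split; [left | exact: I_add | exact: I_mul]. Qed.

Lemma I_decomp j x h : I j x -> h != 0 -> v (iota h) = (a j)%:Z ->
  exists r x1, x = r * h + x1 /\ I j.+1 x1.
Proof.
move=> Ix h0 vh; have [->|x0] := eqVneq x 0.
  by exists 0, 0; rewrite mul0r addr0; split; last by left.
have [vxh|ltx] := eqVneq (v (iota x)) (v (iota h)); last first.
  exists 0, x; rewrite mul0r add0r; split=> //; apply: I_next => _.
  by rewrite lt_neqAle -vh eq_sym ltx vh I_v.
have [r hr] := residue_approx (iota_neq0 x0) h0 vxh.
exists r, (x - h * r); rewrite mulrC addrC subrK; split=> //; apply: I_next.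
by rewrite -(iota_eq0 iota_inj) rmorphB -vh -vxh => /hr.
Qed.

Section Conductor.
Variable n : nat.
Hypothesis n_cond : conductor_index a n.
Hypothesis Rbar_fin : Rbar_finite iota.

Lemma iota_of_v_large : exists N, forall y, y != 0 -> N <= v y -> exists r, y = iota r.
Proof.
have [s [_ Rbar_span]] := Rbar_fin; have [d d0 ds] := common_denominator s.
have id0 := iota_neq0 d0; exists (v (iota d)) => y y0 vy.
have u0 : y / iota d != 0 by rewrite mulf_neq0 ?invr_neq0.
rewrite -[y](divfK id0) mulrC; have [|c ->] := Rbar_span (y / iota d).
  by apply/(Rbar_v u0); rewrite vM ?invr_neq0 // vV // subr_ge0.
rewrite mulr_sumr; apply: (big_ind (fun z => exists r, z = iota r)).
- by exists 0; rewrite rmorph0.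
- by move=> _ _ [r1 ->] [r2 ->]; exists (r1 + r2); rewrite rmorphD.
- move=> l _; have [r dr] := ds l (ltn_ord l).
  by exists (c l * r); rewrite mulrCA dr rmorphM.
Qed.

(* Subtract elements of [R] of the same value, given by the residue isomorphism, until the
   value passes the bound of [iota_of_v_large]. *)
Lemma iota_of_v_conductor y : y != 0 -> (a n)%:Z <= v y -> exists r, y = iota r.
Proof.
have [N HN] := iota_of_v_large => y0 vy.
apply: (@bounded_up_ind _ v (fun z => exists r, z = iota r)
  (fun z => z != 0 /\ (a n)%:Z <= v z) N _ _ y (conj y0 vy)).
  by move=> z [z0 _]; apply: HN.
move=> z [z0 vz]; have [j vzj] : exists j, v z = (a (n + j))%:Z.
  by exists `|v z - (a n)%:Z|%N; rewrite n_cond.1; lia.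
have [h h0 vh] := exists_v_iota (n + j).
have [r hr] := residue_approx z0 h0 (etrans vzj (esym vh)).
exists (z - iota (h * r)); split=> [|[r' zr]]; last first.
  by exists (r' + h * r); rewrite rmorphD -zr subrK.
have [->|z'0] := eqVneq (z - iota (h * r)) 0; first by left; exists 0; rewrite rmorph0.
by right; have lt := hr z'0; do 2?split=> //; exact: le_trans vz (ltW lt).
Qed.

Lemma conductor_gap m : (a m).+1 != a n.
Proof.
apply/eqP => gap; have mn : (m < n)%N by rewrite -a_ltn_mono -gap.
have pred_n : (a n.-1).+1 = a n.
  have : (a m <= a n.-1)%N by rewrite a_mono; lia.
  have : (a n.-1 < a n)%N by rewrite a_ltn_mono; lia.
  lia.
suff /n_cond.2 : forall j, a (n.-1 + j) = (a n.-1 + j)%N by lia.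
case=> [|j]; first by rewrite !addn0.
by rewrite addnS -addSn prednK ?n_cond.1; lia.
Qed.

(* If [v c < 0], [c] maps an element of [J] of value [a n - 1 - v c] to the gap [a n - 1]. *)
Lemma dual_v_ge0 (J : R -> Prop) c :
  (forall r, (a n)%:Z <= v (iota r) -> J r) -> c != 0 ->
  (forall y, J y -> exists r, iota r = c * iota y) -> 0 <= v c.
Proof.
move=> condJ c0 cJ; rewrite leNgt; apply/negP => vc.
have [y y0 vy] := exists_v ((a n)%:Z - 1 - v c).
have [r yr] : exists r, y = iota r by apply: iota_of_v_conductor; rewrite ?vy; lia.
have [r' cr] : exists r', iota r' = c * iota r by apply/cJ/condJ; rewrite -yr vy; lia.
have r'0 : r' != 0 by rewrite -(iota_eq0 iota_inj) cr mulf_eq0 negb_or c0 -yr.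
have [m] := v_iota_semigroup r'0; rewrite cr -yr vM // vy => vm.
by apply/eqP: (conductor_gap m); lia.
Qed.

Lemma I_conductor j : (j <= n)%N -> forall r, (a n)%:Z <= v (iota r) -> I j r.
Proof. by move=> jn r vr; apply: I_of_v => _; apply: le_trans vr; rewrite lez_nat a_mono. Qed.

Lemma I_dual_stable j : (j <= n)%N -> dual_stable iota (I j).
Proof.
move=> jn c c0 cI y r Iy cyr; have vc := dual_v_ge0 (I_conductor jn) c0 cI.
apply: I_of_v => /(iota_eq_mul_neq0 cyr) [_ y0].
by rewrite cyr vM ?iota_neq0 // -[_%:Z]add0r lerD // I_v.
Qed.

Lemma I_in_TR j : (j <= n)%N -> in_TR (I j).
Proof.
move=> jn; have [q q0 vq] := exists_v_iota j.
apply: (in_TR_of_dual_stable iota_inj (I_ideal j) _ q0 (I_dual_stable jn)).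
by apply: I_of_v => _; rewrite vq.
Qed.

Lemma dvd_I_conductor x p : p != 0 ->
  (x != 0 -> (a n)%:Z + v (iota p) <= v (iota x)) -> exists2 w, I n w & x = p * w.
Proof.
move=> p0 vx; have [->|x0] := eqVneq x 0; first by exists 0; [left | rewrite mulr0].
have ip0 := iota_neq0 p0; have vx0 := vx x0.
have u0 : iota x / iota p != 0 by rewrite mulf_neq0 ?invr_neq0 ?iota_neq0.
have vu : (a n)%:Z <= v (iota x / iota p).
  by rewrite vM ?invr_neq0 ?iota_neq0 // vV //; lia.
have [w uw] := iota_of_v_conductor u0 vu.
exists w; first by apply: I_of_v => _; rewrite -uw.
by apply: iota_inj; rewrite rmorphM -uw mulrC divfK.
Qed.

Lemma mul_I_conductor_eq_scale j p : p != 0 -> v (iota p) = (a j)%:Z ->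
  same_ideal (ideal_mul (I j) (I n)) (scale_ideal p (I n)).
Proof.
move=> p0 vp; apply: ideal_mul_eq_scale (I_ideal n) _ _; first by apply: I_of_v => _; rewrite vp.
move=> x z Ix Iz; apply: dvd_I_conductor p0 _; rewrite mulf_eq0 negb_or => /andP [x0 z0].
by rewrite rmorphM vM ?iota_neq0 // vp; have := I_v Ix x0; have := I_v Iz z0; lia.
Qed.

Definition gR_plus_I (g : R) j (x : R) : Prop := exists s y, I j y /\ x = s * g + y.

Lemma gR_plus_I_ideal g j : is_ideal (gR_plus_I g j).
Proof.
split.
- by exists 0, 0; rewrite mul0r addr0; split; first by left.
- move=> _ _ [s1 [y1 [I1 ->]]] [s2 [y2 [I2 ->]]]; exists (s1 + s2), (y1 + y2).
  by rewrite mulrDl addrACA; split; first exact: I_add.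
- move=> b _ [s [y [Iy ->]]]; exists (b * s), (b * y).
  by rewrite mulrDr mulrA; split; first exact: I_mul.
Qed.

Lemma gR_plus_I_gen g j : gR_plus_I g j g.
Proof. by exists 1, 0; rewrite mul1r addr0; split; first by left. Qed.

Lemma I_sub_gR_plus_I g j x : I j x -> gR_plus_I g j x.
Proof. by exists 0, x; rewrite mul0r add0r. Qed.

Lemma v_shift i q al p : q != 0 -> v (iota q) = (a i)%:Z -> I i.+1 p ->
  q + al * p != 0 /\ v (iota (q + al * p)) = (a i)%:Z.
Proof.
move=> q0 vq Ip; have [] := @vD_lt (iota q) (iota (al * p)) (iota_neq0 q0).
  rewrite (iota_eq0 iota_inj) vq => alp0.
  by apply: lt_le_trans (I_v (I_mul al Ip) alp0); rewrite ltz_nat a_ltn_mono.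
by rewrite -rmorphD vq (iota_eq0 iota_inj) => ? ?; split.
Qed.

(* Peel off [al p y'], which again lies in [I i * I (i+2)] and has larger value, until the
   conductor absorbs what is left. *)
Lemma mul_I_eq_scale_shift i q al p : (i.+2 <= n)%N ->
  q != 0 -> v (iota q) = (a i)%:Z -> I i.+1 p ->
  same_ideal (ideal_mul (I i) (I i.+2)) (scale_ideal (q + al * p) (I i.+2)) ->
  same_ideal (ideal_mul (I i) (I i.+2)) (scale_ideal q (I i.+2)).
Proof.
move=> in2 q0 vq Ip gI; have [g0 vg] := v_shift al q0 vq Ip.
apply: ideal_mul_eq_scale (I_ideal _) _ _; first by apply: I_of_v => _; rewrite vq.
move=> x y Ix Iy; suff [z [Iz ->]] : scale_ideal q (I i.+2) (x * y) by exists z.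
apply: (@bounded_up_ind _ (fun r => v (iota r)) (scale_ideal q (I i.+2))
  (ideal_mul (I i) (I i.+2)) ((a n)%:Z + (a i)%:Z)); last exact: ideal_mul_prod.
  move=> z _ vz; have [|w Iw ->] := dvd_I_conductor q0 (x := z); first by rewrite vq.
  by exists w; split; first exact: I_subset Iw.
move=> _ /gI [y' [Iy' ->]]; exists (al * p * y'); split; last first.
  case=> w [Iw e]; exists (y' + w); split; first exact: I_add.
  by rewrite mulrDr -e; ring.
have [->|z'0] := eqVneq (al * p * y') 0; first by left; exists 0; split; [left | rewrite mulr0].
right; split; first exact: ideal_mul_prod (I_mul _ (I_subset (leqnSn _) Ip)) Iy'.
move: z'0; rewrite !mulf_eq0 !negb_or => /andP [/andP [al0 p0] y'0].
rewrite !rmorphM !vM ?mulf_neq0 ?iota_neq0 // vg.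
have := v_iota_ge0 al0; have := I_v Ip p0; have : (a i < a i.+1)%N by rewrite a_ltn_mono.
lia.
Qed.

Section BadIndex.
Variables (i : nat) (g : R).
Hypotheses (g0 : g != 0) (vg : v (iota g) = (a i)%:Z).
Hypothesis succ_good : forall p, p != 0 -> v (iota p) = (a i.+1)%:Z ->
  same_ideal (ideal_mul (I i.+1) (I i.+3)) (scale_ideal p (I i.+3)).

(* Write [x = r g + s p + x2] with [x2] in [I (i+1)]: [p y = g (m y)], and [succ_good]
   applied to [x2 (m y)] puts [x2 y] in [g I (i+2)]. *)
Lemma mul_I_eq_scale_of_multiplier m p : m != 0 -> 1 <= v m ->
  (forall y, I i.+2 y -> exists r, iota r = m * iota y) ->
  iota p = m * iota g -> v (iota p) = (a i.+1)%:Z ->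
  same_ideal (ideal_mul (I i) (I i.+2)) (scale_ideal g (I i.+2)).
Proof.
move=> m0 vm mI gp vp.
have p0 : p != 0 by rewrite -(iota_eq0 iota_inj) gp mulf_neq0 ?iota_neq0.
apply: ideal_mul_eq_scale (I_ideal _) _ _; first by apply: I_of_v => _; rewrite vg.
move=> x y Ix Iy; have [r [x1 [-> Ix1]]] := I_decomp Ix g0 vg.
have [s [x2 [-> Ix2]]] := I_decomp Ix1 p0 vp.
have [my my_y] := mI y Iy.
have Imy : I i.+3 my.
  apply: I_next => my0; have [_ y0] := iota_eq_mul_neq0 my_y my0.
  by rewrite my_y vM ?iota_neq0 //; have := I_v Iy y0; lia.
have [w [Iw x2my]] :=
  (succ_good p0 vp (x2 * my)).1 (ideal_mul_prod (I_subset (leqnSn _) Ix2) Imy).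
have pyg : p * y = g * my by apply: iota_inj; rewrite !rmorphM gp my_y; ring.
have x2yg : x2 * y = g * w.
  apply: iota_inj; apply/(mulfI m0).
  have := congr1 iota x2my; rewrite !rmorphM my_y gp => e.
  by rewrite mulrCA e; ring.
exists (r * y + s * my + w).
  apply: I_add (I_subset (leqnSn _) Iw).
  exact: I_add (I_mul _ Iy) (I_mul _ (I_subset (leqnSn _) Imy)).
by rewrite !mulrDl -!mulrA pyg x2yg; ring.
Qed.

Hypothesis in2 : (i.+2 <= n)%N.
Hypothesis g_bad : ~ same_ideal (ideal_mul (I i) (I i.+2)) (scale_ideal g (I i.+2)).

Local Notation J := (gR_plus_I g i.+2).

(* With [c = r0 + m], [v m >= 1], the element [m g] cannot have value [a (i+1)] because of
   [g_bad], so it lies in [I (i+2)]. *)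
Lemma gR_plus_I_multiplier_gen c : c != 0 ->
  (forall y, J y -> exists r, iota r = c * iota y) -> exists2 r, iota r = c * iota g & J r.
Proof.
move=> c0 cJ.
have vc := dual_v_ge0 (fun r vr => I_sub_gR_plus_I g (I_conductor in2 vr)) c0 cJ.
have [r0 /Rbar_nonunit_v m1] := residue.2 c ((Rbar_v c0).2 vc).
have [r cg] := cJ g (gR_plus_I_gen g _); exists r => //.
exists r0, (r - r0 * g); split; last by rewrite addrC subrK.
have md : iota (r - r0 * g) = (c - iota r0) * iota g by rewrite rmorphB rmorphM cg mulrBl.
apply: I_next => d0; have [m0 _] := iota_eq_mul_neq0 md d0.
have vd : (a i.+1)%:Z <= v (iota (r - r0 * g)).
  by apply: v_iota_next d0 _; rewrite md vM ?iota_neq0 // vg addrC ltrDl gtz0_ge1 m1.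
rewrite lt_neqAle vd andbT; apply/eqP => /esym vd'; apply: g_bad.
apply: (mul_I_eq_scale_of_multiplier m0 (m1 m0) _ md vd') => y Iy.
have [r1 cy] := cJ y (I_sub_gR_plus_I g Iy).
by exists (r1 - r0 * y); rewrite rmorphB rmorphM cy mulrBl.
Qed.

Lemma gR_plus_I_dual_stable : dual_stable iota J.
Proof.
move=> c c0 cJ _ r [s [z [Iz ->]]] cyr.
have [r2 cg Jr2] := gR_plus_I_multiplier_gen c0 cJ.
have [r1 cz] := cJ z (I_sub_gR_plus_I g Iz).
have Ir1 : I i.+2 r1.
  by apply: (I_dual_stable in2 c0 _ Iz cz) => y Iy; apply/cJ/I_sub_gR_plus_I.
have -> : r = s * r2 + r1 by apply: iota_inj; rewrite cyr !rmorphD !rmorphM cg cz; ring.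
by case: (gR_plus_I_ideal g i.+2) => _ JD JM; apply: JD (JM _ _ Jr2) (I_sub_gR_plus_I g Ir1).
Qed.

Lemma gR_plus_I_in_TR : in_TR J.
Proof.
apply: (in_TR_of_dual_stable iota_inj (gR_plus_I_ideal g _) (gR_plus_I_gen g _) g0).
exact: gR_plus_I_dual_stable.
Qed.

Lemma gR_plus_I_notin p : p != 0 -> v (iota p) = (a i.+1)%:Z -> ~ J p.
Proof.
move=> p0 vp [s [y [Iy py]]].
have e : iota p - iota y = iota (s * g) by rewrite -rmorphB py addrK.
have [] := @vD_lt (iota p) (- iota y) (iota_neq0 p0).
  rewrite oppr_eq0 vN (iota_eq0 iota_inj) vp => y0.
  by apply: lt_le_trans (I_v Iy y0); rewrite ltz_nat a_ltn_mono.
rewrite e vp (iota_eq0 iota_inj) mulf_eq0 negb_or => /andP [s0 _] vsg.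
have vs : 1 <= v (iota s).
  move: vsg; rewrite rmorphM vM ?iota_neq0 // vg.
  have : (a i < a i.+1)%N by rewrite a_ltn_mono.
  lia.
apply: g_bad; apply: (mul_I_eq_scale_of_multiplier (iota_neq0 s0) vs _ (rmorphM _ s g) vsg).
by move=> z _; exists (s * z); rewrite rmorphM.
Qed.

Lemma gR_plus_I_neq_I j : ~ same_ideal J (I j).
Proof.
move=> JI; have [p p0 vp] := exists_v_iota i.+1.
have /I_v /(_ g0) : I j g by apply/JI/gR_plus_I_gen.
rewrite vg lez_nat a_mono => ji; apply: (gR_plus_I_notin p0 vp); apply/JI.
by apply: I_subset (leqW ji) _; apply: I_of_v => _; rewrite vp.
Qed.

End BadIndex.

Definition bad_index i : Prop := [/\ (1 <= i)%N, (i <= n - 3)%N &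
  exists q : R, q != 0 /\ v (iota q) = (a i)%:Z /\
    ~ same_ideal (ideal_mul (I i) (I i.+2)) (scale_ideal q (I i.+2))].

(* The index after the largest bad one is good, either by maximality or, when [i + 3 = n],
   because of the conductor. *)
Lemma maximal_bad_index : (exists i, bad_index i) ->
  exists i q, [/\ (i.+2 <= n)%N, q != 0, v (iota q) = (a i)%:Z,
    ~ same_ideal (ideal_mul (I i) (I i.+2)) (scale_ideal q (I i.+2)) &
    forall p, p != 0 -> v (iota p) = (a i.+1)%:Z ->
      same_ideal (ideal_mul (I i.+1) (I i.+3)) (scale_ideal p (I i.+3))].
Proof.
move=> [i0 bad_i0]; have ex_bad : exists i, `[< bad_index i >] by exists i0; apply/asboolP.
have bad_le i : `[< bad_index i >] -> (i <= n - 3)%N by case/asboolP.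
case: (ex_maxnP ex_bad bad_le) => i /asboolP [i1 i_le [q [q0 [vq q_bad]]]] i_max.
exists i, q; split=> // [|p p0 vp]; first lia.
have [lt_i|ge_i] := ltnP i (n - 3); last first.
  have -> : i.+3 = n by lia.
  exact: mul_I_conductor_eq_scale.
apply: contrapT => p_bad; have : (i.+1 <= i)%N by apply/i_max/asboolP; split=> //; exists p.
by rewrite ltnn.
Qed.

Section ShiftedGenerators.
Variables (i : nat) (q p : R).
Hypotheses (in2 : (i.+2 <= n)%N) (q0 : q != 0) (vq : v (iota q) = (a i)%:Z).
Hypothesis q_bad : ~ same_ideal (ideal_mul (I i) (I i.+2)) (scale_ideal q (I i.+2)).
Hypothesis succ_good : forall p, p != 0 -> v (iota p) = (a i.+1)%:Z ->
  same_ideal (ideal_mul (I i.+1) (I i.+3)) (scale_ideal p (I i.+3)).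
Hypotheses (p0 : p != 0) (vp : v (iota p) = (a i.+1)%:Z).

Let Ip : I i.+1 p. Proof. by apply: I_of_v => _; rewrite vp. Qed.

Lemma shift_bad al :
  ~ same_ideal (ideal_mul (I i) (I i.+2)) (scale_ideal (q + al * p) (I i.+2)).
Proof. by move/(mul_I_eq_scale_shift in2 q0 vq Ip). Qed.

Lemma shift_in_TR al : in_TR (gR_plus_I (q + al * p) i.+2).
Proof.
have [g0 vg] := v_shift al q0 vq Ip; exact: gR_plus_I_in_TR g0 vg succ_good in2 (@shift_bad al).
Qed.

Lemma shift_sep al be :
  same_ideal (gR_plus_I (q + al * p) i.+2) (gR_plus_I (q + be * p) i.+2) -> nonunits (al - be).
Proof.
move=> same u; have [g0 vg] := v_shift al q0 vq Ip.
apply: (gR_plus_I_notin g0 vg succ_good in2 (@shift_bad al) p0 vp).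
case: (gR_plus_I_ideal (q + al * p) i.+2) => _ JD JM.
have Jdp : gR_plus_I (q + al * p) i.+2 ((al - be) * p).
  have -> : (al - be) * p = (q + al * p) + (-1) * (q + be * p) by ring.
  by apply: JD (gR_plus_I_gen _ _) _; apply/JM/same/gR_plus_I_gen.
by have := JM (al - be)^-1 _ Jdp; rewrite mulKr.
Qed.

End ShiftedGenerators.

Section ExistsBadIndex.
Hypothesis bad : exists i, bad_index i.

Lemma TR_not_I : exists T, in_TR T /\ forall j, ~ same_ideal T (I j).
Proof.
have [i [q [in2 q0 vq q_bad succ_good]]] := maximal_bad_index bad.
exists (gR_plus_I q i.+2); split; first exact: gR_plus_I_in_TR q0 vq succ_good in2 q_bad.
exact: gR_plus_I_neq_I q0 vq succ_good in2 q_bad.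
Qed.

Lemma TR_infinite : infinite_residue_field R ->
  forall k (L : 'I_k -> R -> Prop), exists T, in_TR T /\ forall l, ~ same_ideal T (L l).
Proof.
move=> Rinf k L; have [i [q [in2 q0 vq q_bad succ_good]]] := maximal_bad_index bad.
have [p p0 vp] := exists_v_iota i.+1.
have [al T_new] := infinite_residue_avoid Rinf (shift_sep in2 q0 vq q_bad succ_good p0 vp) L.
exists (gR_plus_I (q + al * p) i.+2); split=> //.
exact: shift_in_TR in2 q0 vq q_bad succ_good vp al.
Qed.

End ExistsBadIndex.
End Conductor.
End ValueSemigroup.
End Valuation.

Theorem corollary3p7 (R : idomainType) (K : fieldType)
  (iota : {rmorphism R -> K}) (v : K -> int) (a : nat -> nat) (n : nat) :
  is_fraction_field iota ->
  is_local R -> is_noetherian R -> krull_dim_one R ->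
  Rbar_finite iota -> Rbar_local iota ->
  residue_iso iota ->
  normalized_valuation_of_Rbar iota v ->
  enumerates_value_semigroup iota v a ->
  conductor_index a n ->
  (4 <= n)%N ->
  (exists i, [/\ (1 <= i)%N, (i <= n - 3)%N &
     exists q : R, q != 0 /\ v (iota q) = (a i)%:Z /\
       ~ same_ideal (ideal_mul (Ival iota v a i) (Ival iota v a i.+2))
                    (scale_ideal q (Ival iota v a i.+2))]) ->
  (* (1) I(R) is strictly contained in T(R) *)
  ((forall j, (j <= n)%N -> in_TR (Ival iota v a j)) /\
   (exists T, in_TR T /\ forall j, (j <= n)%N -> ~ same_ideal T (Ival iota v a j))) /\
  (* (2) if k is infinite then T(R) is infinite *)
  (infinite_residue_field R ->
   forall (k : nat) (L : 'I_k -> R -> Prop),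
     exists T, in_TR T /\ forall l, ~ same_ideal T (L l)).
Proof.
move=> frac _ _ _ fin _ res vnorm aE nE _ bad.
split; first split.
- by move=> j; apply: I_in_TR.
- have [T [T_TR T_new]] := TR_not_I frac vnorm res aE nE fin bad.
  by exists T; split=> // j _; apply: T_new.
- exact (TR_infinite frac vnorm res aE nE fin bad).
Qed.
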